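(* Let $L$ be any infinite regular language over an alphabet $\Sigma$ with $|\Sigma|\geq 2$. Then there exists a positive integer $m$ such that the following holds: for any integer $n\geq 1$ and any subset $S\subseteq L\cap\Sigma^n$ with $|S|>m$, and for any integer $i\in\{0,1,\ldots,n\}$, there exist two strings $x=x_1x_2$ and $y=y_1y_2$ in $S$ with $|x_1|=|y_1|=i$ and $|x_2|=|y_2|$ such that (i) $x\neq y$, (ii) $y_1x_2\in L$, and (iii) $x_1y_2\in L$.
   Context: $\Sigma^n$ denotes the set of all strings of length exactly $n$ over $\Sigma$; $|w|$ denotes the length of a string $w$. *)

From mathcomp Require Import all_boot.
Set Implicit Arguments. Unset Strict Implicit. Unset Printing Implicit Defensive.

Record dfa (Sigma : finType) := DFA {
  dfa_state : finType;
  dfa_start : dfa_state;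
  dfa_delta : dfa_state -> Sigma -> dfa_state;
  dfa_final : {set dfa_state} }.

Definition dfa_accepts (Sigma : finType) (A : dfa Sigma) (w : seq Sigma) : bool :=
  foldl (@dfa_delta Sigma A) (dfa_start A) w \in dfa_final A.

Definition regular (Sigma : finType) (L : pred (seq Sigma)) : Prop :=
  exists A : dfa Sigma, forall w, L w = dfa_accepts A w.

Definition infinite_lang (Sigma : finType) (L : pred (seq Sigma)) : Prop :=
  ~ exists s : seq (seq Sigma), forall w, L w -> w \in s.

From mathcomp Require Import all_boot.

(* Take m to be the number of states of a DFA for L. Among more than m words of
   S, two of them, x and y, reach the same state after reading their first i
   letters, so the DFA cannot tell x_1 from y_1 and swapping the suffixes keeps
   both words accepted. *)

Lemma pigeonhole_in {aT rT : finType} (f : aT -> rT) {S : {set aT}} :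
  #|rT| < #|S| -> exists x y, [/\ x \in S, y \in S, x != y & f x = f y].
Proof.
move=> card_lt.
have [/exists_inP [x xS /exists_inP [y yS /andP [neq_xy /eqP fxy]]] | no_collision] :=
  boolP [exists x in S, exists y in S, (x != y) && (f x == f y)].
  by exists x, y.
have f_inj : {in S &, injective f}.
  move=> x y xS yS fxy; apply/eqP/negP => neq_xy.
  move/exists_inPn/(_ x xS)/exists_inPn/(_ y yS): no_collision.
  by rewrite fxy eqxx andbT => /negPn.
by move: card_lt; rewrite -(card_in_imset f_inj) ltnNge max_card.
Qed.

Section DFARun.

Variables (Sigma : finType) (A : dfa Sigma).

Definition dfa_run (w : seq Sigma) : dfa_state A :=
  foldl (@dfa_delta Sigma A) (dfa_start A) w.

Lemma dfa_accepts_cat_eq_run (u u' v : seq Sigma) :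
  dfa_run u = dfa_run u' -> dfa_accepts A (u ++ v) = dfa_accepts A (u' ++ v).
Proof. by move=> run_eq; rewrite /dfa_accepts !foldl_cat -/(dfa_run u) run_eq. Qed.

Lemma dfa_accepts_swap_prefix (i : nat) (x y : seq Sigma) :
  dfa_run (take i x) = dfa_run (take i y) ->
  dfa_accepts A x -> dfa_accepts A (take i y ++ drop i x).
Proof.
by move=> run_eq; rewrite -{1}(cat_take_drop i x) (dfa_accepts_cat_eq_run _ _ _ run_eq).
Qed.

End DFARun.

Arguments dfa_run {Sigma} A w.

Theorem lemma3p1 (Sigma : finType) (L : pred (seq Sigma)) :
  2 <= #|Sigma| -> regular L -> infinite_lang L ->
  exists m : nat, 0 < m /\
    forall (n : nat) (S : {set n.-tuple Sigma}),
      1 <= n -> (forall x, x \in S -> L (val x)) -> m < #|S| ->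
      forall i : nat, i <= n ->
        exists x y : n.-tuple Sigma,
          [/\ x \in S, y \in S, x != y,
              L (take i (val y) ++ drop i (val x)) &
              L (take i (val x) ++ drop i (val y))].
Proof.
move=> _ [A L_eq] _; exists #|dfa_state A|; split.
  by apply/card_gt0P; exists (dfa_start A).
move=> n S _ S_sub_L card_S i _.
have [x [y [xS yS neq_xy run_eq]]] :=
  pigeonhole_in (fun w : n.-tuple Sigma => dfa_run A (take i w)) card_S.
have x_acc : dfa_accepts A x by rewrite -L_eq S_sub_L.
have y_acc : dfa_accepts A y by rewrite -L_eq S_sub_L.
by exists x, y; split; rewrite // L_eq dfa_accepts_swap_prefix.
Qed.
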